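(* Suppose the family of update functions $\mathrm{Upd}$ satisfies P1–P5 and that $\mathrm{Upd}^{\mathcal{M}}(\Pr,B)=\emptyset$ for some measure space $\mathcal{M}=(W,\mathcal{F})$, some $\Pr\in\Delta_{\mathcal{M}}$ and some $B\in\mathcal{F}$ with $\Pr(B)\ne0$. Then $\mathrm{Upd}=\mathrm{Upd}_{\mathrm{constrain}}$.
   Context: A measure space is a pair $\mathcal{M}=(W,\mathcal{F})$ with $\mathcal{F}$ an algebra of subsets of $W$; $\Delta_{\mathcal{M}}$ is the set of all probability measures on $\mathcal{M}$. An update function on $\mathcal{M}$ is a map $\mathrm{Upd}^{\mathcal{M}}:2^{\Delta_{\mathcal{M}}}\times\mathcal{F}\to 2^{\Delta_{\mathcal{M}}}$ such that $\mathrm{Upd}^{\mathcal{M}}(X,B)=\emptyset$ whenever $\Pr(B)=0$ for all $\Pr\in X$; $\mathrm{Upd}^{\mathcal{M}}(\Pr,B)$ means $\mathrm{Upd}^{\mathcal{M}}(\{\Pr\},B)$. A family $\mathrm{Upd}=\{\mathrm{Upd}^{\mathcal{M}}\}$ has one update function for each measure space. $\mathrm{Upd}_{\mathrm{constrain}}^{\mathcal{M}}(X,B)=\{\Pr\in X:\Pr(B)=1\}$. A representation shift from $\mathcal{M}=(W,\mathcal{F})$ to $\mathcal{M}'=(W',\mathcal{F}')$ is a surjection $f:W\to W'$ with $f^{-1}(B)\in\mathcal{F}$ for all $B\in\mathcal{F}'$; $(f^*(\Pr))(A)=\Pr(f^{-1}(A))$, $f^*(X)=\{f^*(\Pr):\Pr\in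 X\}$. Postulates (for all $\mathcal{M}=(W,\mathcal{F})$, $X\subseteq\Delta_{\mathcal{M}}$, $B,C\in\mathcal{F}$ unless stated otherwise): P1: $\mathrm{Upd}^{\mathcal{M}}(X,B)\subseteq\{\Pr\in\Delta_{\mathcal{M}}:\Pr(B)=1\}$. P2: for every representation shift $f$ from $\mathcal{M}$ to $\mathcal{M}'=(W',\mathcal{F}')$, $X\subseteq\Delta_{\mathcal{M}}$, $B\in\mathcal{F}'$: $\mathrm{Upd}^{\mathcal{M}'}(f^*(X),B)=f^*(\mathrm{Upd}^{\mathcal{M}}(X,f^{-1}(B)))$. P3: $\mathrm{Upd}^{\mathcal{M}}(\mathrm{Upd}^{\mathcal{M}}(X,B),C)=\mathrm{Upd}^{\mathcal{M}}(X,B\cap C)$. P4: $\mathrm{Upd}^{\mathcal{M}}(X,B)=X$ if $\Pr(B)=1$ for all $\Pr\in X$. P5: $\mathrm{Upd}^{\mathcal{M}}(X,B)=\bigcup_{\Pr\in X}\mathrm{Upd}^{\mathcal{M}}(\Pr,B)$. *)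

From Stdlib Require Import Reals Lra FunctionalExtensionality PropExtensionality.
Open Scope R_scope.

Definition set (T : Type) := T -> Prop.
Definition emptyset {T : Type} : set T := fun _ => False.

Record is_algebra (W : Type) (F : set (set W)) : Prop := {
  alg_full : F (fun _ => True);
  alg_compl : forall A, F A -> F (fun w => ~ A w);
  alg_union : forall A B, F A -> F B -> F (fun w => A w \/ B w)
}.

Record mspace := MSpace {
  carrier : Type;
  events : set (set carrier);
  events_algebra : is_algebra carrier events
}.

Definition event (M : mspace) := { A : set (carrier M) | events M A }.
Definition ev_set {M : mspace} (A : event M) : set (carrier M) := proj1_sig A.

Record prob (M : mspace) := Prob {
  pr :> event M -> R;
  pr_nonneg : forall A, 0 <= pr A;
  pr_total : forall A : event M, (forall w, ev_set A w) -> pr A = 1;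
  pr_add : forall A B C : event M,
      (forall w, ~ (ev_set A w /\ ev_set B w)) ->
      (forall w, ev_set C w <-> ev_set A w \/ ev_set B w) ->
      pr C = pr A + pr B
}.
Arguments pr {M}.

(* Delta_M is the type prob M; subsets of Delta_M are  set (prob M). *)

Lemma events_inter (M : mspace) (B C : set (carrier M)) :
  events M B -> events M C -> events M (fun w => B w /\ C w).
Proof.
  intros hB hC. destruct (events_algebra M) as [hF hc hu].
  assert (E : (fun w => B w /\ C w) = (fun w => ~ ((fun w => ~ B w \/ ~ C w) w))).
  { apply functional_extensionality; intro w; apply propositional_extensionality.
    simpl. split.
    - intros [b c] [nb|nc]; auto.
    - intros H. split; apply Classical_Prop.NNPP; intro; apply H; auto. }
  rewrite E. apply hc. apply hu; apply hc; assumption.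
Qed.

Definition ev_inter {M : mspace} (B C : event M) : event M :=
  exist _ (fun w => ev_set B w /\ ev_set C w)
        (events_inter M _ _ (proj2_sig B) (proj2_sig C)).

Definition upd_family := forall M : mspace, set (prob M) -> event M -> set (prob M).

Definition singleton {T : Type} (x : T) : set T := fun y => y = x.

Definition is_update_family (Upd : upd_family) : Prop :=
  forall (M : mspace) (X : set (prob M)) (B : event M),
    (forall P, X P -> P B = 0) -> Upd M X B = emptyset.

Definition Upd_constrain : upd_family :=
  fun M X B => fun P => X P /\ P B = 1.

Definition measurable_map (M M' : mspace) (f : carrier M -> carrier M') : Prop :=
  forall B, events M' B -> events M (fun w => B (f w)).

Definition surjective {A B : Type} (f : A -> B) : Prop := forall b, exists a, f a = b.

Definition preimage_ev {M M' : mspace} (f : carrier M -> carrier M')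
  (hf : measurable_map M M' f) (B : event M') : event M :=
  exist _ (fun w => ev_set B (f w)) (hf _ (proj2_sig B)).

Section Push.
Variables (M M' : mspace) (f : carrier M -> carrier M') (hf : measurable_map M M' f).
Variable P : prob M.

Definition push_fun (A : event M') : R := P (preimage_ev f hf A).

Lemma push_nonneg : forall A, 0 <= push_fun A.
Proof. intro A; apply pr_nonneg. Qed.

Lemma push_total : forall A : event M', (forall w, ev_set A w) -> push_fun A = 1.
Proof. intros A H; apply pr_total; intro w; apply H. Qed.

Lemma push_add : forall A B C : event M',
    (forall w, ~ (ev_set A w /\ ev_set B w)) ->
    (forall w, ev_set C w <-> ev_set A w \/ ev_set B w) ->
    push_fun C = push_fun A + push_fun B.
Proof. intros A B C H1 H2; apply pr_add; intro w; [apply H1 | apply H2]. Qed.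

Definition pushforward : prob M' := Prob M' push_fun push_nonneg push_total push_add.
End Push.

Definition push_set {M M' : mspace} (f : carrier M -> carrier M')
  (hf : measurable_map M M' f) (X : set (prob M)) : set (prob M') :=
  fun Q => exists P, X P /\ Q = pushforward M M' f hf P.

Definition P1 (Upd : upd_family) : Prop :=
  forall M X B P, Upd M X B P -> pr P B = 1.

Definition P2 (Upd : upd_family) : Prop :=
  forall (M M' : mspace) (f : carrier M -> carrier M') (hf : measurable_map M M' f),
    surjective f ->
    forall (X : set (prob M)) (B : event M'),
      Upd M' (push_set f hf X) B = push_set f hf (Upd M X (preimage_ev f hf B)).

Definition P3 (Upd : upd_family) : Prop :=
  forall M X (B C : event M), Upd M (Upd M X B) C = Upd M X (ev_inter B C).

Definition P4 (Upd : upd_family) : Prop :=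
  forall M X (B : event M), (forall P, X P -> P B = 1) -> Upd M X B = X.

Definition P5 (Upd : upd_family) : Prop :=
  forall M X (B : event M),
    Upd M X B = (fun Q => exists P, X P /\ Upd M (singleton P) B Q).

(* Call z in (0, 1) blocking if Upd(Pr, B) is empty whenever Pr(B) = z.  By P2,
   applied to the indicator map of B into a two-point space, whether Upd(Pr, B)
   is empty depends only on Pr(B), so the hypothesis provides one blocking value.
   The blocking values form a down-set of (0, 1): if A is contained in B and
   Pr(B) is blocking, then Upd(Pr, A) = Upd(Upd(Pr, B), A) = Upd(emptyset, A) is
   empty by P3.  Conversely, let B consist of m + 1 atoms of mass u, with m u
   blocking, and take Q in Upd(Pr, B).  Some atom has Q-mass at most 1/(m + 1),
   and the event A obtained by removing it has Pr(A) = m u, so by P5 and P3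
   Upd(Q, A) is contained in Upd(Pr, A), which is empty; since Q(A) >= m/(m + 1),
   either (m + 1) u or m/(m + 1) is blocking.  A supremum argument then shows
   that every value in (0, 1) is blocking, and P4, the definition of an update
   function and P5 finish the proof. *)

From Stdlib Require Import Reals Lra Lia.
From Stdlib Require Import FunctionalExtensionality PropExtensionality ProofIrrelevance.
From Stdlib Require Import Classical ClassicalEpsilon.
Open Scope R_scope.

Lemma set_ext {T : Type} (A B : set T) : (forall x, A x <-> B x) -> A = B.
Proof.
  intro H; apply functional_extensionality; intro; apply propositional_extensionality; auto.
Qed.

Lemma ev_ext (M : mspace) (A A' : event M) :
  (forall w, ev_set A w <-> ev_set A' w) -> A = A'.
Proof.
  destruct A as [a ha], A' as [a' ha']; simpl; intro H.
  assert (a = a') by now apply set_ext.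
  subst; f_equal; apply proof_irrelevance.
Qed.

Lemma prob_ext (M : mspace) (P Q : prob M) : (forall A, P A = Q A) -> P = Q.
Proof.
  destruct P as [p ? ? ?], Q as [q ? ? ?]; simpl; intro H.
  assert (p = q) by (apply functional_extensionality; auto).
  subst; f_equal; apply proof_irrelevance.
Qed.

Lemma pr_ext (M : mspace) (P : prob M) (A A' : event M) :
  (forall w, ev_set A w <-> ev_set A' w) -> P A = P A'.
Proof. intro H; now rewrite (ev_ext M A A' H). Qed.

Lemma pr_empty (M : mspace) (P : prob M) (A : event M) :
  (forall w, ~ ev_set A w) -> P A = 0.
Proof.
  intro H.
  assert (P A = P A + P A) by (apply pr_add; intro w; specialize (H w); tauto).
  lra.
Qed.

Definition ev_full (M : mspace) : event M :=
  exist _ (fun _ => True) (alg_full _ _ (events_algebra M)).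

Definition ev_compl {M : mspace} (A : event M) : event M :=
  exist _ (fun w => ~ ev_set A w) (alg_compl _ _ (events_algebra M) _ (proj2_sig A)).

Lemma pr_compl (M : mspace) (P : prob M) (A : event M) : P (ev_compl A) = 1 - P A.
Proof.
  assert (E : P (ev_full M) = P A + P (ev_compl A))
    by (apply pr_add; intro w; simpl; tauto).
  rewrite (pr_total M P (ev_full M)) in E by (intro; exact I).
  lra.
Qed.

Lemma pr_le1 (M : mspace) (P : prob M) (A : event M) : P A <= 1.
Proof. pose proof (pr_compl M P A); pose proof (pr_nonneg M P (ev_compl A)); lra. Qed.

Lemma push_set_singleton (M M' : mspace) (f : carrier M -> carrier M')
  (hf : measurable_map M M' f) (P : prob M) :
  push_set f hf (singleton P) = singleton (pushforward M M' f hf P).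
Proof.
  apply set_ext; intro Q; unfold push_set, singleton; split.
  - now intros [P' [-> ->]].
  - intros ->; eauto.
Qed.

Lemma push_set_empty (M M' : mspace) (f : carrier M -> carrier M')
  (hf : measurable_map M M' f) (X : set (prob M)) :
  push_set f hf X = emptyset <-> X = emptyset.
Proof.
  split; intro H.
  - apply set_ext; intro P; split; [intro hP | intros []].
    change (emptyset (pushforward M M' f hf P)); rewrite <- H; now exists P.
  - subst; apply set_ext; intro Q; split; [intros [P [[] _]] | intros []].
Qed.

(** * Indicator maps *)

Definition Mbool : mspace := MSpace bool (fun _ => True)
  {| alg_full := I; alg_compl := fun _ _ => I; alg_union := fun _ _ _ _ => I |}.

Definition ev_true : event Mbool := exist _ (fun b => b = true) I.

Definition indicator {M : mspace} (B : event M) (w : carrier M) : bool :=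
  if excluded_middle_informative (ev_set B w) then true else false.

Lemma indicatorP {M : mspace} (B : event M) (w : carrier M) :
  (ev_set B w /\ indicator B w = true) \/ (~ ev_set B w /\ indicator B w = false).
Proof. unfold indicator; destruct excluded_middle_informative; auto. Qed.

Lemma indicator_measurable (M : mspace) (B : event M) :
  measurable_map M Mbool (indicator B).
Proof.
  intros C _; destruct (events_algebra M) as [hfull hcompl _].
  destruct (classic (C true)) as [ht | ht], (classic (C false)) as [hf | hf].
  - replace (fun w => C (indicator B w)) with (fun _ : carrier M => True); [exact hfull|].
    apply set_ext; intro w; destruct (indicator B w); tauto.
  - replace (fun w => C (indicator B w)) with (ev_set B); [exact (proj2_sig B)|].
    apply set_ext; intro w; destruct (indicatorP B w) as [[? ->] | [? ->]]; tauto.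
  - replace (fun w => C (indicator B w)) with (fun w => ~ ev_set B w);
      [exact (hcompl _ (proj2_sig B))|].
    apply set_ext; intro w; destruct (indicatorP B w) as [[? ->] | [? ->]]; tauto.
  - replace (fun w => C (indicator B w)) with (fun _ : carrier M => ~ True);
      [exact (hcompl _ hfull)|].
    apply set_ext; intro w; destruct (indicator B w); tauto.
Qed.

Definition indR (A : Prop) (r : R) : R := if excluded_middle_informative A then r else 0.

Lemma pushforward_indicator (M : mspace) (P : prob M) (B : event M)
  (hf : measurable_map M Mbool (indicator B)) (A : event Mbool) :
  pushforward M Mbool (indicator B) hf P A =
  indR (ev_set A true) (P B) + indR (ev_set A false) (1 - P B).
Proof.
  simpl; unfold push_fun, indR.
  destruct (excluded_middle_informative (ev_set A true)) as [ht | ht],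
    (excluded_middle_informative (ev_set A false)) as [hf' | hf'].
  - rewrite pr_total; [lra|]. intro w; simpl; destruct (indicator B w); auto.
  - rewrite (pr_ext M P _ B); [lra|]. intro w; simpl.
    destruct (indicatorP B w) as [[? ->] | [? ->]]; tauto.
  - rewrite (pr_ext M P _ (ev_compl B)), pr_compl; [lra|]. intro w; simpl.
    destruct (indicatorP B w) as [[? ->] | [? ->]]; tauto.
  - rewrite pr_empty; [lra|]. intro w; simpl; destruct (indicator B w); auto.
Qed.

Lemma indicator_surjective (M : mspace) (P : prob M) (B : event M) :
  0 < P B < 1 -> surjective (indicator B).
Proof.
  intros hB [|].
  - apply NNPP; intro H. assert (P B = 0); [|lra].
    apply pr_empty; intros w hw; apply H; exists w.
    destruct (indicatorP B w) as [[? ->] | [? ?]]; tauto.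
  - apply NNPP; intro H. assert (P B = 1); [|lra].
    apply pr_total; intro w; apply NNPP; intro hw; apply H; exists w.
    destruct (indicatorP B w) as [[? ?] | [? ->]]; tauto.
Qed.

Lemma preimage_indicator_true (M : mspace) (B : event M)
  (hf : measurable_map M Mbool (indicator B)) :
  @preimage_ev M Mbool (indicator B) hf ev_true = B.
Proof.
  apply ev_ext; intro w; simpl.
  destruct (indicatorP B w) as [[? ->] | [? ->]]; intuition discriminate.
Qed.

(** * Discrete probabilities on the naturals *)

Fixpoint sumR (f : nat -> R) (n : nat) : R :=
  match n with O => 0 | S n => sumR f n + f n end.

Lemma sumR_ext (f g : nat -> R) (n : nat) :
  (forall j, (j < n)%nat -> f j = g j) -> sumR f n = sumR g n.
Proof.
  induction n as [|n IH]; intro H; simpl; auto.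
  rewrite IH, H; auto; intros; apply H; lia.
Qed.

Lemma sumR_add (f g : nat -> R) (n : nat) :
  sumR (fun j => f j + g j) n = sumR f n + sumR g n.
Proof. induction n as [|n IH]; simpl; [lra | rewrite IH; lra]. Qed.

Lemma sumR_nonneg (f : nat -> R) (n : nat) : (forall j, 0 <= f j) -> 0 <= sumR f n.
Proof. intro H; induction n as [|n IH]; simpl; [lra | specialize (H n); lra]. Qed.

Lemma sumR_const (c : R) (n : nat) : sumR (fun _ => c) n = INR n * c.
Proof. induction n as [|n IH]; simpl sumR; [simpl; lra | rewrite IH, S_INR; lra]. Qed.

Lemma sumR_gt (f : nat -> R) (c : R) (n : nat) :
  (0 < n)%nat -> (forall j, (j < n)%nat -> c < f j) -> INR n * c < sumR f n.
Proof.
  induction n as [|n IH]; intros hn H; [lia|].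
  simpl sumR; rewrite S_INR.
  assert (c < f n) by (apply H; lia).
  destruct (Nat.eq_dec n 0) as [-> | hn0]; [simpl; lra|].
  assert (INR n * c < sumR f n) by (apply IH; [lia | intros; apply H; lia]).
  lra.
Qed.

Lemma exists_le_of_sumR_le (f : nat -> R) (c : R) (n : nat) :
  (0 < n)%nat -> sumR f n <= INR n * c -> exists j, (j < n)%nat /\ f j <= c.
Proof.
  intros hn hsum; apply NNPP; intro H.
  enough (INR n * c < sumR f n) by lra.
  apply sumR_gt; auto; intros j hj.
  apply Rnot_le_lt; intro; apply H; eauto.
Qed.

Lemma sumR_atom (w : nat -> R) (i n : nat) :
  sumR (fun j => indR (j = i) (w j)) n = if (i <? n)%nat then w i else 0.
Proof.
  induction n as [|n IH]; simpl sumR; [reflexivity|].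
  rewrite IH; unfold indR.
  destruct (excluded_middle_informative (n = i)) as [-> | hne].
  - rewrite (proj2 (Nat.ltb_ge i i)), (proj2 (Nat.ltb_lt i (S i))) by lia; lra.
  - destruct (Nat.ltb_spec i n), (Nat.ltb_spec i (S n)); try lia; lra.
Qed.

Definition Mnat : mspace := MSpace nat (fun _ => True)
  {| alg_full := I; alg_compl := fun _ _ => I; alg_union := fun _ _ _ _ => I |}.

Definition ev_nat (A : set nat) : event Mnat := exist _ A I.

Section Discrete.
Variables (w : nat -> R) (n : nat).
Hypotheses (w_nonneg : forall j, 0 <= w j) (w_sum : sumR w n = 1).

Definition discrete_fun (A : event Mnat) : R := sumR (fun j => indR (ev_set A j) (w j)) n.

Lemma discrete_nonneg (A : event Mnat) : 0 <= discrete_fun A.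
Proof.
  apply sumR_nonneg; intro j; unfold indR.
  destruct excluded_middle_informative; [apply w_nonneg | lra].
Qed.

Lemma discrete_total (A : event Mnat) : (forall j, ev_set A j) -> discrete_fun A = 1.
Proof.
  intro H; unfold discrete_fun; rewrite <- w_sum; apply sumR_ext; intros j _.
  unfold indR; destruct excluded_middle_informative; [reflexivity | exfalso; auto].
Qed.

Lemma discrete_add (A B C : event Mnat) :
  (forall j, ~ (ev_set A j /\ ev_set B j)) ->
  (forall j, ev_set C j <-> ev_set A j \/ ev_set B j) ->
  discrete_fun C = discrete_fun A + discrete_fun B.
Proof.
  intros hAB hC; unfold discrete_fun; rewrite <- sumR_add; apply sumR_ext; intros j _.
  specialize (hAB j); specialize (hC j); unfold indR.
  destruct (excluded_middle_informative (ev_set C j)), (excluded_middle_informative (ev_set A j)),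
    (excluded_middle_informative (ev_set B j)); tauto || lra.
Qed.

Definition discrete_prob : prob Mnat :=
  Prob Mnat discrete_fun discrete_nonneg discrete_total discrete_add.

Lemma discrete_prob_atom (i : nat) :
  (i < n)%nat -> discrete_prob (ev_nat (fun j => j = i)) = w i.
Proof.
  intro hi; simpl; unfold discrete_fun; simpl.
  rewrite sumR_atom, (proj2 (Nat.ltb_lt i n) hi); reflexivity.
Qed.

End Discrete.

Lemma pr_nat_lt (Q : prob Mnat) (k : nat) :
  Q (ev_nat (fun j => (j < k)%nat)) = sumR (fun j => Q (ev_nat (fun i => i = j))) k.
Proof.
  induction k as [|k IH]; simpl.
  - apply pr_empty; simpl; lia.
  - rewrite <- IH; apply pr_add; simpl; intros; lia.
Qed.

Lemma discrete_prob_lt (w : nat -> R) (n : nat) (hw : forall j, 0 <= w j) (hsum : sumR w n = 1)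
  (k : nat) :
  (k <= n)%nat -> discrete_prob w n hw hsum (ev_nat (fun j => (j < k)%nat)) = sumR w k.
Proof.
  intro hk; rewrite pr_nat_lt; apply sumR_ext; intros.
  apply discrete_prob_atom; lia.
Qed.

Lemma pr_nat_lt_remove (Q : prob Mnat) (k i : nat) : (i < k)%nat ->
  Q (ev_nat (fun j => (j < k)%nat)) =
  Q (ev_nat (fun j => (j < k)%nat /\ j <> i)) + Q (ev_nat (fun j => j = i)).
Proof.
  intro hi; apply pr_add; simpl; intros j; [lia|].
  destruct (Nat.eq_dec j i); lia.
Qed.

Lemma exists_uniform_atoms (k : nat) (u : R) :
  0 <= u -> INR k * u <= 1 ->
  exists P : prob Mnat, forall i, (i < k)%nat -> P (ev_nat (fun j => j = i)) = u.
Proof.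
  intros hu hku.
  set (wt := fun j => if (j <? k)%nat then u else if (j =? k)%nat then 1 - INR k * u else 0).
  assert (wt_nonneg : forall j, 0 <= wt j).
  { intro j; unfold wt; destruct (j <? k)%nat, (j =? k)%nat; lra. }
  assert (wt_sum : sumR wt (S k) = 1).
  { change (sumR wt (S k)) with (sumR wt k + wt k).
    rewrite (sumR_ext _ (fun _ => u)), sumR_const; unfold wt.
    - rewrite (proj2 (Nat.ltb_ge k k)), Nat.eqb_refl by lia; lra.
    - intros j hj; unfold wt; now rewrite (proj2 (Nat.ltb_lt j k) hj). }
  exists (discrete_prob wt (S k) wt_nonneg wt_sum); intros i hi.
  rewrite discrete_prob_atom by lia; unfold wt.
  now rewrite (proj2 (Nat.ltb_lt i k) hi).
Qed.

Lemma exists_atom_le_mean (Q : prob Mnat) (k : nat) : (0 < k)%nat ->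
  exists i, (i < k)%nat /\
    INR k * Q (ev_nat (fun j => j = i)) <= Q (ev_nat (fun j => (j < k)%nat)).
Proof.
  intro hk; assert (k_pos : 0 < INR k) by (apply lt_0_INR; exact hk).
  destruct (exists_le_of_sumR_le (fun j => Q (ev_nat (fun i => i = j)))
              (Q (ev_nat (fun j => (j < k)%nat)) / INR k) k hk) as [i [hi Qi]].
  - rewrite <- pr_nat_lt; field_simplify; lra.
  - exists i; split; [exact hi|].
    apply Rmult_le_reg_r with (/ INR k); [now apply Rinv_0_lt_compat|].
    rewrite Rmult_comm, <- Rmult_assoc, Rinv_l; lra.
Qed.

(** * Blocking values of an update family *)

Section Blocking.
Variable Upd : upd_family.
Hypotheses (Hupd : is_update_family Upd) (HP1 : P1 Upd) (HP2 : P2 Upd) (HP3 : P3 Upd)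
  (HP4 : P4 Upd) (HP5 : P5 Upd).

Lemma upd_singleton_null (M : mspace) (P : prob M) (B : event M) :
  P B = 0 -> Upd M (singleton P) B = emptyset.
Proof. intro hB; apply Hupd; now intros P' ->. Qed.

(* [P4] quantifies over sets of measure functions [event M -> R], which are
   then read back as sets of probabilities. *)
Lemma upd_singleton_certain (M : mspace) (P : prob M) (B : event M) :
  P B = 1 -> Upd M (singleton P) B = singleton P.
Proof.
  intro hB.
  assert (E : (fun Q : prob M => pr Q = pr P) = singleton P).
  { apply set_ext; intro Q; unfold singleton; split; [|now intros ->].
    intro e; apply prob_ext; intro A; now rewrite e. }
  rewrite <- E; apply (HP4 M (fun f => f = pr P)); now intros f ->.
Qed.

Lemma upd_singleton_sub (M : mspace) (X : set (prob M)) (P : prob M) (B : event M) :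
  X P -> forall Q, Upd M (singleton P) B Q -> Upd M X B Q.
Proof. intros hP Q hQ; rewrite HP5; eauto. Qed.

Lemma upd_singleton_empty_iff (M : mspace) (P : prob M) (B : event M) :
  0 < P B < 1 ->
  Upd M (singleton P) B = emptyset <->
  Upd Mbool (singleton (pushforward M Mbool (indicator B) (indicator_measurable M B) P))
    ev_true = emptyset.
Proof.
  intro hB.
  pose proof (HP2 M Mbool (indicator B) (indicator_measurable M B)
                (indicator_surjective M P B hB) (singleton P) ev_true) as E.
  rewrite preimage_indicator_true, push_set_singleton in E.
  now rewrite E, push_set_empty.
Qed.

Definition blocking (z : R) : Prop :=
  forall (M : mspace) (P : prob M) (B : event M), P B = z -> Upd M (singleton P) B = emptyset.

Lemma blocking_of_empty (M : mspace) (P : prob M) (B : event M) :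
  0 < P B < 1 -> Upd M (singleton P) B = emptyset -> blocking (P B).
Proof.
  intros hB hemp M' P' B' e.
  apply upd_singleton_empty_iff in hemp; [|exact hB].
  apply upd_singleton_empty_iff; [lra|].
  replace (pushforward M' Mbool (indicator B') (indicator_measurable M' B') P')
    with (pushforward M Mbool (indicator B) (indicator_measurable M B) P); [exact hemp|].
  apply prob_ext; intro A; now rewrite !pushforward_indicator, e.
Qed.

Lemma blocking_le (z w : R) : 0 < z <= w -> w < 1 -> blocking w -> blocking z.
Proof.
  intros hz hw1 hw.
  destruct (Req_dec z w) as [-> | hzw]; [exact hw|].
  set (wt := fun j : nat => match j with O => z | 1%nat => w - z | 2%nat => 1 - w | _ => 0 end).
  assert (wt_nonneg : forall j, 0 <= wt j) by (intros [|[|[|j]]]; simpl; lra).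
  assert (wt_sum : sumR wt 3 = 1) by (simpl; lra).
  set (P := discrete_prob wt 3 wt_nonneg wt_sum).
  set (B := ev_nat (fun j => (j < 2)%nat)).
  set (A := ev_nat (fun j => (j < 1)%nat)).
  assert (PA : P A = z) by (unfold P, A; rewrite discrete_prob_lt by lia; simpl; lra).
  assert (PB : P B = w) by (unfold P, B; rewrite discrete_prob_lt by lia; simpl; lra).
  assert (hA : Upd Mnat (singleton P) A = emptyset).
  { replace A with (ev_inter B A) by (apply ev_ext; simpl; lia).
    rewrite <- HP3, (hw Mnat P B PB).
    apply Hupd; intros ? []. }
  rewrite <- PA; apply blocking_of_empty; [lra | exact hA].
Qed.

Lemma blocking_split (m : nat) (u : R) :
  (0 < m)%nat -> 0 < u -> INR (S m) * u < 1 -> blocking (INR m * u) ->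
  blocking (INR (S m) * u) \/ blocking (INR m / INR (S m)).
Proof.
  intros hm hu hu1 hx.
  assert (Sm_pos : 0 < INR (S m)) by (apply lt_0_INR; lia).
  destruct (exists_uniform_atoms (S m) u) as [P P_atom]; [lra | lra |].
  set (B := ev_nat (fun j => (j < S m)%nat)).
  assert (PB : P B = INR (S m) * u).
  { unfold B; rewrite pr_nat_lt, (sumR_ext _ (fun _ => u)), sumR_const; auto. }
  destruct (classic (Upd Mnat (singleton P) B = emptyset)) as [E | E].
  { left; rewrite <- PB; apply blocking_of_empty; [|exact E].
    rewrite PB; split; [nra | exact hu1]. }
  right.
  assert (hQ : exists Q, Upd Mnat (singleton P) B Q).
  { apply NNPP; intro hn; apply E, set_ext; intro Q; split; [intro; apply hn; eauto | intros []]. }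
  destruct hQ as [Q hQ].
  assert (QB : Q B = 1) by exact (HP1 _ _ _ _ hQ).
  destruct (exists_atom_le_mean Q (S m)) as [i [hi Qi]]; [lia|]; fold B in Qi.
  set (A := ev_nat (fun j => (j < S m)%nat /\ j <> i)).
  assert (PA : P A = INR m * u).
  { pose proof (pr_nat_lt_remove P (S m) i hi) as split_P; fold B A in split_P.
    rewrite P_atom in split_P by exact hi.
    rewrite S_INR in PB; lra. }
  assert (QA : INR m / INR (S m) <= Q A).
  { pose proof (pr_nat_lt_remove Q (S m) i hi) as split_Q; fold B A in split_Q.
    apply Rmult_le_reg_r with (INR (S m)); [exact Sm_pos|].
    field_simplify; [rewrite S_INR in *; nra | lra]. }
  assert (hA : Upd Mnat (singleton Q) A = emptyset).
  { apply set_ext; intro R0; split; [intro hR0 | intros []].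
    rewrite <- (hx Mnat P A PA).
    replace A with (ev_inter B A) by (apply ev_ext; simpl; lia).
    rewrite <- HP3; exact (upd_singleton_sub _ _ _ _ hQ R0 hR0). }
  assert (QA1 : Q A < 1).
  { destruct (Rle_lt_or_eq (Q A) 1 (pr_le1 _ Q A)) as [? | e]; [assumption | exfalso].
    assert (hQQ : Upd Mnat (singleton Q) A Q)
      by (rewrite upd_singleton_certain by exact e; reflexivity).
    now rewrite hA in hQQ. }
  assert (r_pos : 0 < INR m / INR (S m)) by (apply Rdiv_lt_0_compat; apply lt_0_INR; lia).
  apply (blocking_le _ (Q A)); [lra | exact QA1|].
  apply blocking_of_empty; [lra | exact hA].
Qed.

Lemma blocking_all (a : R) : 0 < a < 1 -> blocking a -> forall z, 0 < z < 1 -> blocking z.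
Proof.
  intros ha hba.
  set (E := fun z => 0 < z < 1 /\ blocking z).
  destruct (completeness E) as [s [s_ub s_lub]].
  { exists 1; intros z hz; apply Rlt_le, hz. }
  { exists a; split; assumption. }
  assert (a_le_s : a <= s) by (apply s_ub; split; assumption).
  assert (below : forall z, 0 < z < s -> blocking z).
  { intros z hz; apply NNPP; intro hn.
    enough (s <= z) by lra.
    apply s_lub; intros x [hx hbx]; apply Rnot_lt_le; intro hzx.
    apply hn, (blocking_le z x); [lra | apply hx | exact hbx]. }
  enough (1 <= s) by (intros z hz; apply below; lra).
  apply Rnot_lt_le; intro hs1.
  destruct (INR_archimed (1 - s) s) as [m hm]; [lra|].
  assert (m_pos : 0 < INR m) by nra.
  (* [u] is chosen so that [m u < s < (m + 1) u < 1]; note [s < m / (m + 1)] by [hm]. *)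
  set (u := 2 * s / (2 * INR m + 1)).
  assert (u_pos : 0 < u) by (unfold u; apply Rdiv_lt_0_compat; lra).
  assert (x_lt : INR m * u < s).
  { unfold u; apply Rmult_lt_reg_r with (2 * INR m + 1); [lra|]; field_simplify; nra. }
  assert (y_gt : s < INR (S m) * u).
  { rewrite S_INR; unfold u; apply Rmult_lt_reg_r with (2 * INR m + 1); [lra|].
    field_simplify; nra. }
  assert (y_lt : INR (S m) * u < 1).
  { rewrite S_INR; unfold u; apply Rmult_lt_reg_r with (2 * INR m + 1); [lra|].
    field_simplify; nra. }
  assert (r_bounds : s < INR m / INR (S m) < 1).
  { rewrite S_INR; split; apply Rmult_lt_reg_r with (INR m + 1); try lra; field_simplify; lra. }
  destruct (blocking_split m u) as [hy | hr].
  - apply (INR_lt 0); simpl; lra.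
  - exact u_pos.
  - exact y_lt.
  - apply below; nra.
  - enough (INR (S m) * u <= s) by lra.
    apply s_ub; split; [nra | exact hy].
  - enough (INR m / INR (S m) <= s) by lra.
    apply s_ub; split; [|exact hr].
    split; [apply Rdiv_lt_0_compat; [|apply lt_0_INR; lia]|]; lra.
Qed.

Lemma blocking_of_witness :
  (exists (M : mspace) (P : prob M) (B : event M),
      P B <> 0 /\ Upd M (singleton P) B = emptyset) ->
  exists a, 0 < a < 1 /\ blocking a.
Proof.
  intros [M [P [B [hB0 hemp]]]].
  assert (hB1 : P B <> 1).
  { intro e; rewrite upd_singleton_certain in hemp by exact e.
    change (emptyset P); rewrite <- hemp; reflexivity. }
  assert (hB : 0 < P B < 1) by (pose proof (pr_nonneg M P B); pose proof (pr_le1 M P B); lra).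
  exists (P B); split; [exact hB | now apply blocking_of_empty].
Qed.

Lemma upd_singleton_constrain :
  (forall z, 0 < z < 1 -> blocking z) ->
  forall (M : mspace) (P : prob M) (B : event M),
    Upd M (singleton P) B = Upd_constrain M (singleton P) B.
Proof.
  intros hall M P B.
  destruct (Req_dec (P B) 1) as [h1 | h1].
  { rewrite upd_singleton_certain by exact h1; unfold Upd_constrain, singleton.
    apply set_ext; intro Q; split; [intros ->; auto | tauto]. }
  replace (Upd M (singleton P) B) with (@emptyset (prob M)).
  - unfold Upd_constrain, singleton.
    apply set_ext; intro Q; split; [intros [] | intros [-> ?]; lra].
  - symmetry; destruct (Req_dec (P B) 0) as [h0 | h0]; [now apply upd_singleton_null|].
    pose proof (pr_nonneg M P B); pose proof (pr_le1 M P B).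
    apply (hall (P B)); [lra | reflexivity].
Qed.
End Blocking.

Theorem proposition4p5 (Upd : upd_family) :
  is_update_family Upd ->
  P1 Upd -> P2 Upd -> P3 Upd -> P4 Upd -> P5 Upd ->
  (exists (M : mspace) (P : prob M) (B : event M),
      P B <> 0 /\ Upd M (singleton P) B = emptyset) ->
  forall (M : mspace) (X : set (prob M)) (B : event M),
    Upd M X B = Upd_constrain M X B.
Proof.
  intros Hupd HP1 HP2 HP3 HP4 HP5 hwitness M X B.
  destruct (blocking_of_witness Upd HP2 HP4 hwitness) as [a [ha hblock]].
  pose proof (blocking_all Upd Hupd HP1 HP2 HP3 HP4 HP5 a ha hblock) as hall.
  rewrite HP5; apply set_ext; intro Q; unfold Upd_constrain; split.
  - intros [P [hP hQ]].
    rewrite (upd_singleton_constrain Upd Hupd HP4 hall) in hQ.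
    now destruct hQ as [-> hQB].
  - intros [hQ hQB]; exists Q; split; [exact hQ|].
    rewrite (upd_singleton_constrain Upd Hupd HP4 hall).
    now split.
Qed.
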